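(* Let $p\colon X\to B_1$ and $q\colon Y\to B_2$ be Boolean sets with binary meets and let $\varphi\colon X\to Y$ be a morphism of Boolean sets. Then $\varphi$ preserves binary meets if and only if the relational covering morphism $\hat\varphi\colon Y^{\ast}\to X^{\ast}$ (where $\hat\varphi(G)$ is the set of ultrafilters $H$ of $X$ with $H\subseteq\varphi^{-1}(G)$) is a partial map, i.e. $|\hat\varphi(G)|\le 1$ for every ultrafilter $G$ of $Y$.
   Context: Convention: a ''Boolean algebra'' means a generalized Boolean algebra (relatively complemented distributive lattice with $0$); morphisms preserve lattice operations, $0$ and relative complements. Boolean set: a presheaf of sets $p\colon X\to B$ over a Boolean algebra $B$ (pairwise disjoint $X_e$, restriction maps $x\mapsto x|^e_f$ for $e\ge f$ with $|^e_e=\mathrm{id}$, $(x|^e_f)|^f_g=x|^e_g$) with all $X_e\ne\emptyset$, such that under the order $x\le y$ iff $p(x)\le p(y)$ and $x=y|^{p(y)}_{p(x)}$ there is a least element $0$, compatible pairs ($x\wedge y$ exists and $p(x\wedge y)=p(x)\wedge p(y)$) have joins, and $p(x)=0\Rightarrow x=0$. It has binary meets if $x\wedge y$ exists for all $x,y$. A morphism of Boolean sets is $\varphi\colon X\to Y$ with a Boolean algebra morphism $\overline{\varphi}\colon B_1\to B_2$ such that $q\varphi=\overline{\varphi}p$ and $\varphi(x|^a_b)=\varphi(x)|^{\overline{\varphi}(a)}_{\overline{\varphi}(b)}$; it preserves binary meets if $\varphi(x\wedge y)=\varphi(x)\wedge\varphi(y)$. Dual étalé spaces: $X^{\ast}$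 (resp. $Y^{\ast}$) is the set of ultrafilters (maximal proper non-empty down-directed upward-closed subsets) of $X$ (resp. $Y$), topologized by the basis $L(a)=\{G: a\in G\}$, projecting to the ultrafilter spaces of $B_1$, $B_2$ via $G\mapsto p(G)$ (resp. $q(G)$). The map $\hat\varphi$ has underlying map $F\mapsto\overline{\varphi}^{-1}(F)$ on ultrafilters of $B_2$. *)

(* generalized Boolean algebras are cbDistrLatticeType
   (sectionally complemented distributive lattices with bottom). *)
From HB Require Import structures.
From mathcomp Require Import all_boot all_order.
Set Implicit Arguments. Unset Strict Implicit. Unset Printing Implicit Defensive.
Import Order.Theory.
Local Open Scope order_scope.

Definition ba_morphism d1 (B1 : cbDistrLatticeType d1) d2 (B2 : cbDistrLatticeType d2)
  (f : B1 -> B2) : Prop :=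
  (forall a b, f (a `&` b) = f a `&` f b) /\
  (forall a b, f (a `|` b) = f a `|` f b) /\
  f \bot = \bot /\
  (forall a b, f (a `\` b) = f a `\` f b).

Section BooleanSets.
Variables (d : Order.disp_t) (B : cbDistrLatticeType d) (X : Type).
Variables (p : X -> B) (res : X -> B -> X).
(* res x f stands for x|^{p x}_f (only meaningful for f <= p x). *)

Definition bs_le (x y : X) : Prop := p x <= p y /\ x = res y (p x).

Definition bs_is_meet (x y m : X) : Prop :=
  bs_le m x /\ bs_le m y /\ (forall z, bs_le z x -> bs_le z y -> bs_le z m).

Definition bs_is_join (x y j : X) : Prop :=
  bs_le x j /\ bs_le y j /\ (forall z, bs_le x z -> bs_le y z -> bs_le j z).

Definition is_boolean_set : Prop :=
  (* presheaf axioms *)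
  (forall x, res x (p x) = x) /\
  (forall x f, f <= p x -> p (res x f) = f) /\
  (forall x f g, g <= f -> f <= p x -> res (res x f) g = res x g) /\
  (forall e : B, exists x, p x = e) /\
  (exists z, (forall x, bs_le z x) /\ (forall x, p x = \bot -> x = z)) /\
  (* compatible pairs have joins *)
  (forall x y m, bs_is_meet x y m -> p m = p x `&` p y ->
     exists j, bs_is_join x y j).

Definition has_binary_meets : Prop := forall x y, exists m, bs_is_meet x y m.

Definition bs_is_filter (F : X -> Prop) : Prop :=
  (exists x, F x) /\
  (forall x y, F x -> bs_le x y -> F y) /\
  (forall x y, F x -> F y -> exists z, F z /\ bs_le z x /\ bs_le z y) /\
  (exists x, ~ F x).

Definition bs_is_ultrafilter (F : X -> Prop) : Prop :=
  bs_is_filter F /\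
  (forall F', bs_is_filter F' -> (forall x, F x -> F' x) -> forall x, F' x -> F x).

End BooleanSets.

Definition bs_morphism d1 (B1 : cbDistrLatticeType d1) (X : Type)
  (p : X -> B1) (resX : X -> B1 -> X)
  d2 (B2 : cbDistrLatticeType d2) (Y : Type) (q : Y -> B2) (resY : Y -> B2 -> Y)
  (phi : X -> Y) (phibar : B1 -> B2) : Prop :=
  ba_morphism phibar /\
  (forall x, q (phi x) = phibar (p x)) /\
  (forall x b, b <= p x -> phi (resX x b) = resY (phi x) (phibar b)).

Definition preserves_binary_meets d1 (B1 : cbDistrLatticeType d1) (X : Type)
  (p : X -> B1) (resX : X -> B1 -> X)
  d2 (B2 : cbDistrLatticeType d2) (Y : Type) (q : Y -> B2) (resY : Y -> B2 -> Y)
  (phi : X -> Y) : Prop :=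
  forall x y m, bs_is_meet p resX x y m -> bs_is_meet q resY (phi x) (phi y) (phi m).

Definition phi_hat d1 (B1 : cbDistrLatticeType d1) (X : Type)
  (p : X -> B1) (resX : X -> B1 -> X) (Y : Type)
  (phi : X -> Y) (G : Y -> Prop) (H : X -> Prop) : Prop :=
  bs_is_ultrafilter p resX H /\ (forall x, H x -> G (phi x)).

(* For a meet-preserving phi, two ultrafilters H1, H2 of X lying over the same
   ultrafilter G of Y generate, through the meets of their elements, a proper
   filter: a meet m with p m = 0 would put phi m = phi x1 /\ phi x2, the zero
   of Y, in G.
   Maximality then forces H1 = H2.
   Conversely, every element x with phi x in G determines an ultrafilter over
   G, namely the up-closure of the u <= x with phi u in G; maximality uses that
   G is prime (it contains v|_b or v|_(p v - b) whenever it contains v).  If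
   phi m lies strictly below w = phi x /\ phi y, an ultrafilter G containing
   w|_(q w - q (phi m)) contains phi x and phi y but not phi m; the ultrafilters
   determined by x and by y then differ. *)
From mathcomp Require Import all_boot all_order.
From mathcomp Require Import boolp classical_sets.
Set Implicit Arguments. Unset Strict Implicit. Unset Printing Implicit Defensive.
Import Order.Theory.
Local Open Scope order_scope.

Lemma meet_diff_bot d (B : cbDistrLatticeType d) (a b v : B) :
  a <= v -> a `&` b = \bot -> a `&` (v `\` b) = \bot -> a = \bot.
Proof.
move=> av ab; have avb : a <= v `\` b by rewrite leBRL av ab eqxx.
by rewrite (meet_idPl avb).
Qed.

Lemma le_diff_bot d (B : cbDistrLatticeType d) (a b v : B) :
  a <= b -> a <= v `\` b -> a = \bot.
Proof. by move=> ab; rewrite leBRL (meet_idPl ab) => /andP[_ /eqP]. Qed.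

Section BooleanSet.
Variables (d : Order.disp_t) (B : cbDistrLatticeType d) (X : Type).
Variables (p : X -> B) (res : X -> B -> X).
Hypothesis HB : is_boolean_set p res.
Local Notation le := (bs_le p res).

Lemma res_id x : res x (p x) = x.
Proof. by case: HB. Qed.

Lemma p_res x b : b <= p x -> p (res x b) = b.
Proof. by case: HB => _ [+ _]; apply. Qed.

Lemma res_res x b c : c <= b -> b <= p x -> res (res x b) c = res x c.
Proof. by case: HB => _ [_ [+ _]]; apply. Qed.

Lemma bs_le_refl x : le x x.
Proof. by split; rewrite ?res_id. Qed.

Lemma bs_le_trans y x z : le x y -> le y z -> le x z.
Proof.
move=> [pxy ex] [pyz ey]; split; first exact: le_trans pxy pyz.
by rewrite {1}ex {1}ey res_res.
Qed.

Lemma bs_le_p x y : le x y -> p x <= p y.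
Proof. by case. Qed.

Lemma res_bs_le x b : b <= p x -> le (res x b) x.
Proof. by move=> bx; split; rewrite p_res. Qed.

Lemma bs_le_res t x b : le t x -> p t <= b -> b <= p x -> le t (res x b).
Proof. by move=> [ptx et] ptb bx; split; rewrite ?p_res // res_res. Qed.

Lemma bs_le_res_below t x b : le t x -> b <= p t -> le (res x b) t.
Proof.
move=> [ptx et] bt; have bx : b <= p x := le_trans bt ptx.
by rewrite et; apply: bs_le_res; rewrite ?p_res //; exact: res_bs_le.
Qed.

Lemma bs_le_res_meet c g h :
  le g h -> le (res g (p g `&` c)) (res h (p h `&` c)).
Proof.
move=> gh; apply: bs_le_res; last exact: leIl.
- by apply: bs_le_trans gh; apply: res_bs_le; exact: leIl.
- by rewrite p_res ?leIl // leI2 // bs_le_p.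
Qed.

Lemma bs_le_of_p_bot x y : p x = \bot -> le x y.
Proof. by case: HB => _ [_ [_ [_ [[z [zl zb]] _]]]] /zb ->. Qed.

Lemma filter_p_neq0 F x : bs_is_filter p res F -> F x -> p x <> \bot.
Proof.
by move=> [_ [Fup [_ [y Fy]]]] Fx /(bs_le_of_p_bot y) xy; exact/Fy/(Fup _ _ Fx xy).
Qed.

Definition bs_up_closed (A : X -> Prop) : Prop :=
  forall x y, A x -> le x y -> A y.

Definition bs_directed (A : X -> Prop) : Prop :=
  forall x y, A x -> A y -> exists z, A z /\ le z x /\ le z y.

Definition bs_upclosure (D : X -> Prop) (y : X) : Prop := exists2 u, D u & le u y.

Lemma bs_upclosureW (D : X -> Prop) x : D x -> bs_upclosure D x.
Proof. by exists x => //; exact: bs_le_refl. Qed.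

Lemma bs_filter_intro A : (exists x, A x) -> bs_up_closed A -> bs_directed A ->
  (forall x, A x -> p x <> \bot) -> bs_is_filter p res A.
Proof.
move=> A0 Aup Adir Abot; do 3!split=> //.
have [z pz] : exists z, p z = \bot by case: HB => _ [_ [_ [+ _]]]; apply.
by exists z => /Abot.
Qed.

Lemma bs_filter_upclosure D : (exists x, D x) -> bs_directed D ->
  (forall x, D x -> p x <> \bot) -> bs_is_filter p res (bs_upclosure D).
Proof.
move=> [x Dx] Ddir Dbot; apply: bs_filter_intro.
- by exists x; exact: bs_upclosureW.
- by move=> a b [u Du ua] ab; exists u => //; exact: bs_le_trans ua ab.
- move=> a b [u Du ua] [v Dv vb]; have [w [Dw [wu wv]]] := Ddir _ _ Du Dv.
  exists w; split; first exact: bs_upclosureW.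
  by split; [exact: bs_le_trans wu ua | exact: bs_le_trans wv vb].
- move=> a [u Du ua] pa; apply: (Dbot _ Du).
  by apply/eqP; rewrite -lex0 -pa bs_le_p.
Qed.

(* The filter generated by the restrictions g|_(p g /\ c) is proper
   exactly when no g in G below v is disjoint from c. *)
Lemma ultrafilter_res_mem G v c : bs_is_ultrafilter p res G -> G v -> c <= p v ->
  (forall g, G g -> le g v -> p g `&` c <> \bot) -> G (res v c).
Proof.
move=> [Gf Gmax] Gv cv Gc; have [_ [_ [Gdir _]]] := Gf.
pose D y := exists2 g, G g /\ le g v & y = res g (p g `&` c).
have Df : bs_is_filter p res (bs_upclosure D).
  apply: bs_filter_upclosure.
  - by exists (res v (p v `&` c)), v; split=> //; exact: bs_le_refl.
  - move=> _ _ [g1 [Gg1 g1v] ->] [g2 [Gg2 g2v] ->].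
    have [g [Gg [gg1 gg2]]] := Gdir _ _ Gg1 Gg2.
    exists (res g (p g `&` c)); split; last by split; apply: bs_le_res_meet.
    by exists g; split=> //; exact: bs_le_trans gg1 g1v.
  - by move=> _ [g [Gg gv] ->]; rewrite p_res ?leIl //; exact: Gc.
apply: (Gmax _ Df).
- move=> y Gy; have [g [Gg [gy gv]]] := Gdir _ _ Gy Gv.
  exists (res g (p g `&` c)); first by exists g.
  by apply: bs_le_trans gy; apply: res_bs_le; exact: leIl.
- apply: bs_upclosureW; exists v; last by rewrite (meet_idPr cv).
  by split=> //; exact: bs_le_refl.
Qed.

Lemma ultrafilter_res_or_diff G v b : bs_is_ultrafilter p res G -> G v ->
  b <= p v -> G (res v b) \/ G (res v (p v `\` b)).
Proof.
move=> GU Gv bv; have [Gb|nGb] := EM (G (res v b)); [by left | right].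
apply: ultrafilter_res_mem => //; first exact: leBx.
move=> g Gg gv gb'; apply: nGb; apply: ultrafilter_res_mem => // g' Gg' _ g'b.
have [_ [_ [Gdir _]]] := GU.1.
have [h [Gh [hg hg']]] := Gdir _ _ Gg Gg'.
apply: (filter_p_neq0 GU.1 Gh); apply: (@meet_diff_bot _ _ _ b (p v)).
- exact: le_trans (bs_le_p hg) (bs_le_p gv).
- by apply/eqP; rewrite -lex0 -g'b leI2 // bs_le_p.
- by apply/eqP; rewrite -lex0 -gb' leI2 // bs_le_p.
Qed.

Lemma ultrafilter_exists w : p w <> \bot ->
  exists G, bs_is_ultrafilter p res G /\ G w.
Proof.
move=> pw.
pose P (A : set X) := [/\ bs_up_closed A, bs_directed A,
  forall a, A a -> p a <> \bot & forall a, A a -> A w].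
have [|A [[Aup Adir Abot Aw] Amax]] := @Zorn_bigcup X P.
  move=> F FP Ftot; split.
  - move=> a b [A FA Aa] ab; exists A => //.
    by have [Aup _ _ _] := FP A FA; exact: Aup ab.
  - move=> a b [A FA Aa] [A' FA' A'b].
    have [AA'|A'A] := Ftot _ _ FA FA'.
      have [_ A'dir _ _] := FP A' FA'.
      have [c [A'c cab]] := A'dir _ _ (AA' _ Aa) A'b.
      by exists c; split=> //; exists A'.
    have [_ Adir _ _] := FP A FA.
    have [c [Ac cab]] := Adir _ _ Aa (A'A _ A'b).
    by exists c; split=> //; exists A.
  - by move=> a [A FA Aa]; have [_ _ Abot _] := FP A FA; exact: Abot Aa.
  - by move=> a [A FA Aa]; exists A => //; have [_ _ _ Aw] := FP A FA; exact: Aw Aa.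
have {}Aw : A w.
  have [//|nAw] := EM (A w); exfalso; apply: (Amax (le w)).
    by split=> [a /Aw // | wA]; apply/nAw/wA; exact: bs_le_refl.
  split=> [a b wa ab|a b wa wb|a wa pa|_ _]; last exact: bs_le_refl.
  - exact: bs_le_trans wa ab.
  - by exists w; split=> //; exact: bs_le_refl.
  - by apply/pw/eqP; rewrite -lex0 -pa bs_le_p.
have Af : bs_is_filter p res A by apply: bs_filter_intro => //; exists w.
exists A; split=> //; split=> // F Ff AF.
have [//|nFA] := EM (F `<=` A)%classic; exfalso; apply: (Amax F) => //.
have [_ [Fup [Fdir _]]] := Ff.
by split=> // [a|_ _]; [exact: filter_p_neq0 | exact: AF].
Qed.

End BooleanSet.

Section BooleanSetMorphism.
Variables (d1 : Order.disp_t) (B1 : cbDistrLatticeType d1) (X : Type).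
Variables (p : X -> B1) (resX : X -> B1 -> X).
Variables (d2 : Order.disp_t) (B2 : cbDistrLatticeType d2) (Y : Type).
Variables (q : Y -> B2) (resY : Y -> B2 -> Y).
Variables (phi : X -> Y) (phibar : B1 -> B2).
Hypotheses (HX : is_boolean_set p resX) (HY : is_boolean_set q resY).
Hypothesis Hphi : bs_morphism p resX q resY phi phibar.
Local Notation leX := (bs_le p resX).
Local Notation leY := (bs_le q resY).

Lemma phibarI a b : phibar (a `&` b) = phibar a `&` phibar b.
Proof. by case: Hphi => [[+ _] _]. Qed.

Lemma phibar0 : phibar \bot = \bot.
Proof. by case: Hphi => [[_ [_ [+ _]]] _]. Qed.

Lemma phibarB a b : phibar (a `\` b) = phibar a `\` phibar b.
Proof. by case: Hphi => [[_ [_ [_ +]]] _]. Qed.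

Lemma q_phi x : q (phi x) = phibar (p x).
Proof. by case: Hphi => [_ [+ _]]. Qed.

Lemma phi_res x b : b <= p x -> phi (resX x b) = resY (phi x) (phibar b).
Proof. by case: Hphi => [_ [_ +]]; apply. Qed.

Lemma phibar_le a b : a <= b -> phibar a <= phibar b.
Proof. by move/meet_idPl => e; apply/meet_idPl; rewrite -phibarI e. Qed.

Lemma phi_bs_le x y : leX x y -> leY (phi x) (phi y).
Proof.
move=> [pxy ex]; split; first by rewrite !q_phi phibar_le.
by rewrite q_phi {1}ex phi_res.
Qed.

Lemma filter_phi_neq0 G x : bs_is_filter q resY G -> G (phi x) -> p x <> \bot.
Proof. by move=> Gf Gx px; apply: (filter_p_neq0 HY Gf Gx); rewrite q_phi px phibar0. Qed.

Lemma phi_hat_sub G H1 H2 : has_binary_meets p resX ->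
  preserves_binary_meets p resX q resY phi -> bs_is_filter q resY G ->
  phi_hat p resX phi G H1 -> phi_hat p resX phi G H2 -> forall h, H1 h -> H2 h.
Proof.
move=> mX pres Gf [[H1f _] H1G] [[H2f H2max] H2G].
have [[a1 H1a1] [_ [H1dir _]]] := H1f; have [[a2 H2a2] [_ [H2dir _]]] := H2f.
have [_ [Gup [Gdir _]]] := Gf.
pose D m := exists x1 x2, [/\ H1 x1, H2 x2 & bs_is_meet p resX x1 x2 m].
have meetD x1 x2 : H1 x1 -> H2 x2 -> exists2 m, D m & leX m x1 /\ leX m x2.
  by move=> h1 h2; have [m mm] := mX x1 x2; exists m; [exists x1, x2 | case: mm => ? []].
have Df : bs_is_filter p resX (bs_upclosure p resX D).
  apply: bs_filter_upclosure => //.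
  - by have [m Dm _] := meetD _ _ H1a1 H2a2; exists m.
  - move=> m m' [x1 [x2 [h1 h2 [_ [_ mu]]]]] [x1' [x2' [h1' h2' [_ [_ mu']]]]].
    have [y1 [Hy1 [y1x1 y1x1']]] := H1dir _ _ h1 h1'.
    have [y2 [Hy2 [y2x2 y2x2']]] := H2dir _ _ h2 h2'.
    have [n Dn [ny1 ny2]] := meetD _ _ Hy1 Hy2.
    exists n; split=> //; split; [apply: mu | apply: mu'].
    + exact: (bs_le_trans HX ny1 y1x1).
    + exact: (bs_le_trans HX ny2 y2x2).
    + exact: (bs_le_trans HX ny1 y1x1').
    + exact: (bs_le_trans HX ny2 y2x2').
  - move=> m [x1 [x2 [h1 h2 mm]]]; apply: (filter_phi_neq0 Gf).
    have [t [Gt [t1 t2]]] := Gdir _ _ (H1G _ h1) (H2G _ h2).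
    exact: Gup Gt ((pres _ _ _ mm).2.2 _ t1 t2).
move=> h H1h; apply: (H2max _ Df).
- by move=> y H2y; have [m Dm [_ my]] := meetD _ _ H1a1 H2y; exists m.
- by have [m Dm [mh _]] := meetD _ _ H1h H2a2; exists m.
Qed.

Definition phi_hat_at (G : Y -> Prop) (x : X) : X -> Prop :=
  bs_upclosure p resX (fun u => leX u x /\ G (phi u)).

Lemma phi_hat_at_filter G x : bs_is_filter q resY G -> G (phi x) ->
  bs_is_filter p resX (phi_hat_at G x).
Proof.
move=> Gf Gx; have [_ [Gup [Gdir _]]] := Gf.
apply: bs_filter_upclosure => //.
- by exists x; split=> //; exact: (bs_le_refl HX _).
- move=> u1 u2 [u1x Gu1] [u2x Gu2].
  have cx : p u1 `&` p u2 <= p x by apply: leIxl; exact: bs_le_p u1x.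
  have [t [Gt [t1 t2]]] := Gdir _ _ Gu1 Gu2.
  exists (resX x (p u1 `&` p u2)); split; last first.
    by split; apply: (bs_le_res_below HX); rewrite ?leIl ?leIr.
  split; first exact: res_bs_le HX _ _ cx.
  apply: Gup Gt _; rewrite phi_res //; apply: (bs_le_res HY) => //.
  - exact: (bs_le_trans HY t1 (phi_bs_le u1x)).
  - by rewrite phibarI lexI -!q_phi !(bs_le_p t1, bs_le_p t2).
  - by rewrite q_phi phibar_le.
- by move=> u [_ Gu]; exact: filter_phi_neq0 Gf Gu.
Qed.

Lemma phi_hat_at_in_hat G x : bs_is_ultrafilter q resY G -> G (phi x) ->
  phi_hat p resX phi G (phi_hat_at G x).
Proof.
move=> GU Gx; have [Gf _] := GU; have [_ [Gup _]] := Gf.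
split; last by move=> z [u [_ Gu] uz]; exact: Gup Gu (phi_bs_le uz).
split; first exact: phi_hat_at_filter.
move=> H Hf sub z Hz; have [_ [_ [Hdir _]]] := Hf.
have Hx : H x by apply/sub/(bs_upclosureW HX); split=> //; exact: (bs_le_refl HX _).
have [c [Hc [cz cx]]] := Hdir _ _ Hz Hx.
have [Gc|Gc'] : G (phi c) \/ G (phi (resX x (p x `\` p c))).
  have -> : phi c = resY (phi x) (phibar (p c)) by rewrite {1}cx.2 phi_res ?cx.1.
  rewrite phi_res ?leBx // phibarB -(q_phi x).
  by apply: (ultrafilter_res_or_diff HY GU Gx); rewrite q_phi phibar_le ?cx.1.
- by exists c.
have Hc' : H (resX x (p x `\` p c)).
  by apply/sub/(bs_upclosureW HX); split=> //; exact/(res_bs_le HX)/leBx.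
have [t [Ht [tc tc']]] := Hdir _ _ Hc Hc'; exfalso.
have := bs_le_p tc'; rewrite (p_res HX) ?leBx // => tcx.
exact: (filter_p_neq0 HX Hf Ht (le_diff_bot (bs_le_p tc) tcx)).
Qed.

Lemma preserves_meets_of_unique_hat : has_binary_meets q resY ->
  (forall G, bs_is_ultrafilter q resY G -> forall H1 H2,
     phi_hat p resX phi G H1 -> phi_hat p resX phi G H2 -> H1 = H2) ->
  preserves_binary_meets p resX q resY phi.
Proof.
move=> mY unique x y m mm; have [w ww] := mY (phi x) (phi y).
suff -> : phi m = w by [].
have [mx [my mu]] := mm; have [wx [wy _]] := ww.
have mw : leY (phi m) w := ww.2.2 _ (phi_bs_le mx) (phi_bs_le my).
have [//|ne] := EM (phi m = w); exfalso.
pose c := q w `\` q (phi m).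
have c0 : c <> \bot.
  move/eqP; rewrite diff_eq0 => wm; apply: ne.
  have e : q (phi m) = q w by apply/le_anti; rewrite mw.1 wm.
  by rewrite mw.2 e res_id.
have pw' : q (resY w c) <> \bot by rewrite (p_res HY) ?leBx.
have [G [GU Gw']] := ultrafilter_exists HY pw'.
have [Gf _] := GU; have [_ [Gup [Gdir _]]] := Gf.
have w'w : leY (resY w c) w by apply: (res_bs_le HY); rewrite ?leBx.
have Gx : G (phi x) := Gup _ _ Gw' (bs_le_trans HY w'w wx).
have Gy : G (phi y) := Gup _ _ Gw' (bs_le_trans HY w'w wy).
have : phi_hat_at G x y.
  rewrite (unique G GU _ _ (phi_hat_at_in_hat GU Gx) (phi_hat_at_in_hat GU Gy)).
  by apply: (bs_upclosureW HX); split=> //; exact: (bs_le_refl HX _).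
move=> [u [ux Gu] uy].
have [t [Gt [tm tw']]] := Gdir _ _ (Gup _ _ Gu (phi_bs_le (mu _ ux uy))) Gw'.
have := bs_le_p tw'; rewrite (p_res HY) ?leBx // => tc.
exact: (filter_p_neq0 HY Gf Gt (le_diff_bot (bs_le_p tm) tc)).
Qed.

End BooleanSetMorphism.

Theorem proposition3p16 (d1 : Order.disp_t) (B1 : cbDistrLatticeType d1) (X : Type)
  (p : X -> B1) (resX : X -> B1 -> X)
  (d2 : Order.disp_t) (B2 : cbDistrLatticeType d2) (Y : Type) (q : Y -> B2) (resY : Y -> B2 -> Y)
  (phi : X -> Y) (phibar : B1 -> B2) :
  is_boolean_set p resX -> has_binary_meets p resX ->
  is_boolean_set q resY -> has_binary_meets q resY ->
  bs_morphism p resX q resY phi phibar ->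
  (preserves_binary_meets p resX q resY phi <->
   forall G : Y -> Prop, bs_is_ultrafilter q resY G ->
     forall H1 H2 : X -> Prop,
       phi_hat p resX phi G H1 -> phi_hat p resX phi G H2 -> H1 = H2).
Proof.
move=> HX mX HY mY Hphi; split=> [pres G GU H1 H2 h1 h2 | unique].
  by apply/predeqP => h; split; apply: (phi_hat_sub HX HY Hphi mX pres GU.1).
exact: preserves_meets_of_unique_hat HX HY Hphi mY unique.
Qed.
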